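(* Let $m\ge1$ be an integer, let $\tilde H\in\Omega_{2n}$ be invertible and Hermitian, and let $\tilde B\in\Omega_{2n}$ be $\tilde H$-selfadjoint with $\sigma(\tilde B)\subset(0,\infty)$. Then there exists an $\tilde H$-selfadjoint $\tilde A\in\Omega_{2n}$ such that $\tilde A^m=\tilde B$.
   Context: $\Omega_{2n}=\{\begin{bmatrix}A_1&\bar A_2\\-A_2&\bar A_1\end{bmatrix}: A_1,A_2\in\mathbb{C}^{n\times n}\}\subset\mathbb{C}^{2n\times 2n}$. For an invertible Hermitian $H$, $A$ is $H$-selfadjoint if $HA=A^*H$. $\sigma(\cdot)$ denotes the spectrum. *)

From HB Require Import structures.
From mathcomp Require Import all_boot all_order all_algebra.
From mathcomp Require Import complex.
From mathcomp Require Import reals.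
Set Implicit Arguments. Unset Strict Implicit. Unset Printing Implicit Defensive.
Import Order.TTheory GRing.Theory Num.Theory.
Local Open Scope ring_scope.

Definition mxconj {C : numClosedFieldType} {m n} (A : 'M[C]_(m, n)) : 'M[C]_(m, n) :=
  map_mx Num.conj A.
Definition adjmx {C : numClosedFieldType} {m n} (A : 'M[C]_(m, n)) : 'M[C]_(n, m) :=
  (mxconj A)^T.

Definition inOmega {C : numClosedFieldType} (n : nat) (M : 'M[C]_(n + n)) : Prop :=
  exists A1 A2 : 'M[C]_n, M = block_mx A1 (mxconj A2) (- A2) (mxconj A1).

Definition is_hermitian {C : numClosedFieldType} {n} (H : 'M[C]_n) : Prop := adjmx H = H.

Definition H_selfadjoint {C : numClosedFieldType} {n} (H A : 'M[C]_n) : Prop :=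
  H *m A = adjmx A *m H.

Definition spec_pos {C : numClosedFieldType} {n} (B : 'M[C]_n) : Prop :=
  forall a : C, eigenvalue B a -> a \is Num.real /\ 0 < a.

From HB Require Import structures.
From mathcomp Require Import all_boot all_order all_algebra.
From mathcomp Require Import complex reals.
Import Order.TTheory GRing.Theory Num.Theory.
Set Implicit Arguments. Unset Strict Implicit. Unset Printing Implicit Defensive.
Local Open Scope ring_scope.

(* The root is taken to be A = p(B) for a polynomial p with REAL
   coefficients.  Such an A automatically inherits everything needed:
   - Omega_{2n} is a real algebra (closed under sums, products and real
     scalars), so p(B) lies in Omega_{2n} whenever B does;
   - H-selfadjoint matrices are closed under sums, real scalars and products
     of commuting factors, so p(B) is H-selfadjoint whenever B is.
   It remains to choose p with p(B)^m = B.  The characteristic polynomial of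
   B is prod_j (X - r_j) with all r_j > 0 real, and by Cayley-Hamilton it is
   enough that prod_j (X - r_j) divides p^m - X in R[X].  Such a p is built
   one root at a time (a Hermite-interpolation / Newton-lifting argument):
   at a new root, p is corrected so that p(r) is a real m-th root of r; at a
   repeated root, the correction is a Newton step, possible since p(r) != 0. *)

Section RealRoots.
Variables (R : rcfType) (m : nat).
Hypothesis m_gt0 : (0 < m)%N.

(* Positive elements of a real closed field have m-th roots: take the real
   part of the principal m-th root of r in the algebraic closure R[i]. *)
Lemma rcf_pos_root (r : R) : 0 < r -> exists s : R, s ^+ m = r.
Proof.
move=> r_gt0; pose y : R[i] := m.-root (r%:C)%C.
have y_real : y \is Num.real by apply/gtr0_real; rewrite rootC_gt0 // ltcR.
exists (complex.Re y); apply: (@complexI R).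
by rewrite rmorphXn /= RRe_real // rootCK.
Qed.

Lemma powD_sub (p Q : {poly R}) (c : R) :
  (p + c%:P * Q) ^+ m - p ^+ m =
  c%:P * Q * \sum_(i < m) (p + c%:P * Q) ^+ (m.-1 - i) * p ^+ i.
Proof. by rewrite subrXX addrC addKr. Qed.

(* Lifting step at a root r not in Q: adjust p so that its value at r is an
   m-th root of r; divisibility by Q is kept and Q is coprime to 'X - r. *)
Lemma lift_new_root (p Q : {poly R}) (r : R) : 0 < r -> ~~ root Q r ->
  Q %| p ^+ m - 'X -> exists c : R, ('X - r%:P) * Q %| (p + c%:P * Q) ^+ m - 'X.
Proof.
move=> r_gt0 Qr_neq0 Q_dvd; have [s s_root] := rcf_pos_root r_gt0.
exists ((s - p.[r]) / Q.[r]); set q := p + _ * Q.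
have q_r : q.[r] = s.
  by rewrite hornerD hornerM hornerC divfK // addrC subrK.
rewrite Gauss_dvdp; last by rewrite coprimep_sym coprimep_XsubC.
rewrite dvdp_XsubCl; apply/andP; split.
  by apply/rootP; rewrite hornerD hornerN hornerX horner_exp q_r s_root subrr.
rewrite -(subrK (p ^+ m) (q ^+ m)) -addrA powD_sub -mulrA mulrCA.
by rewrite dvdp_add // dvdp_mulIl.
Qed.

(* Newton-type lifting step at a root r of Q: p(r)^m = r forces p(r) != 0,
   so the derivative m p(r)^(m-1) of y |-> y^m is invertible at p(r). *)
Lemma lift_repeated_root (p Q : {poly R}) (r : R) : 0 < r -> root Q r ->
  Q %| p ^+ m - 'X -> exists c : R, ('X - r%:P) * Q %| (p + c%:P * Q) ^+ m - 'X.
Proof.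
move=> r_gt0 /rootP Qr0 /dvdpP [g g_def].
have p_root : p.[r] ^+ m = r.
  apply/eqP; rewrite -subr_eq0; move/(congr1 (horner^~ r)): g_def.
  by rewrite hornerM Qr0 mulr0 hornerD hornerN hornerX horner_exp => ->.
have pr_neq0 : p.[r] != 0.
  by apply: contraTneq r_gt0 => pr0; rewrite -p_root pr0 expr0n gt_eqF ?ltxx.
pose d := m%:R * p.[r] ^+ m.-1.
have d_neq0 : d != 0 by rewrite mulf_neq0 ?pnatr_eq0 -?lt0n ?expf_neq0.
exists (- g.[r] / d); set c := - g.[r] / d; set q := p + _ * Q.
pose S := \sum_(i < m) q ^+ (m.-1 - i) * p ^+ i.
have -> : q ^+ m - 'X = (c%:P * S + g) * Q.
  by rewrite mulrDl -g_def -mulrA [S * Q]mulrC mulrA -powD_sub addrA subrK.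
apply: dvdp_mul (dvdpp Q); rewrite dvdp_XsubCl; apply/rootP.
have S_r : S.[r] = d.
  rewrite horner_sum (eq_bigr (fun _ => p.[r] ^+ m.-1)) ?sumr_const ?card_ord.
    by rewrite /d mulr_natl.
  move=> i _; rewrite hornerM !horner_exp hornerD hornerM Qr0 mulr0 addr0.
  by rewrite -exprD subnK // -ltnS prednK.
by rewrite hornerD hornerM hornerC S_r divfK // addNr.
Qed.

Lemma poly_root_mod (rs : seq R) : all (fun r => 0 < r) rs ->
  exists p : {poly R}, \prod_(r <- rs) ('X - r%:P) %| p ^+ m - 'X.
Proof.
elim: rs => [|r rs IH] /=; first by exists 0; rewrite big_nil dvd1p.
case/andP=> r_gt0 /IH [p]; rewrite big_cons; set Q := \prod_(_ <- _) _.
move=> Q_dvd; have [Qr0|Qr_neq0] := boolP (root Q r).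
  by have [c] := lift_repeated_root r_gt0 Qr0 Q_dvd; exists (p + c%:P * Q).
by have [c] := lift_new_root r_gt0 Qr_neq0 Q_dvd; exists (p + c%:P * Q).
Qed.

End RealRoots.

Section ConjugateTranspose.
Variable C : numClosedFieldType.

Lemma mxconjK m n (A : 'M[C]_(m, n)) : mxconj (mxconj A) = A.
Proof. by apply/matrixP=> i j; rewrite !mxE conjCK. Qed.

Lemma mxconjD m n (A B : 'M[C]_(m, n)) : mxconj (A + B) = mxconj A + mxconj B.
Proof. exact: raddfD. Qed.

Lemma mxconjN m n (A : 'M[C]_(m, n)) : mxconj (- A) = - mxconj A.
Proof. exact: raddfN. Qed.

Lemma mxconj0 m n : mxconj (0 : 'M[C]_(m, n)) = 0.
Proof. exact: raddf0. Qed.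

Lemma mxconjM m n p (A : 'M[C]_(m, n)) (B : 'M[C]_(n, p)) :
  mxconj (A *m B) = mxconj A *m mxconj B.
Proof. exact: map_mxM. Qed.

Lemma mxconj_scalar n (c : C) : c^* = c -> mxconj (c%:M : 'M[C]_n) = c%:M.
Proof. by move=> c_real; rewrite /mxconj map_scalar_mx /= c_real. Qed.

Lemma adjmxD m n (A B : 'M[C]_(m, n)) : adjmx (A + B) = adjmx A + adjmx B.
Proof. by rewrite /adjmx mxconjD linearD. Qed.

Lemma adjmxM m n p (A : 'M[C]_(m, n)) (B : 'M[C]_(n, p)) :
  adjmx (A *m B) = adjmx B *m adjmx A.
Proof. by rewrite /adjmx mxconjM trmx_mul. Qed.

Lemma adjmx_scalar n (c : C) : c^* = c -> adjmx (c%:M : 'M[C]_n) = c%:M.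
Proof. by move=> c_real; rewrite /adjmx mxconj_scalar // tr_scalar_mx. Qed.

End ConjugateTranspose.

Section OmegaAlgebra.
Variables (C : numClosedFieldType) (n : nat).

Lemma inOmega0 : inOmega (0 : 'M[C]_(n + n)).
Proof. by exists 0, 0; rewrite mxconj0 oppr0 block_mx0. Qed.

Lemma inOmegaD (A B : 'M[C]_(n + n)) : inOmega A -> inOmega B -> inOmega (A + B).
Proof.
move=> [A1 [A2 ->]] [B1 [B2 ->]]; exists (A1 + B1), (A2 + B2).
by rewrite add_block_mx !mxconjD opprD.
Qed.

Lemma inOmega_scalar (c : C) : c^* = c -> inOmega (c%:M : 'M[C]_(n + n)).
Proof.
move=> c_real; exists c%:M, 0.
by rewrite mxconj0 oppr0 mxconj_scalar // scalar_mx_block.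
Qed.

Lemma inOmegaM (A B : 'M[C]_(n + n)) : inOmega A -> inOmega B -> inOmega (A *m B).
Proof.
move=> [A1 [A2 ->]] [B1 [B2 ->]].
exists (A1 *m B1 - mxconj A2 *m B2), (A2 *m B1 + mxconj A1 *m B2).
rewrite mulmx_block; congr block_mx.
- by rewrite mulmxN.
- by rewrite mxconjD !mxconjM !mxconjK addrC.
- by rewrite opprD mulNmx mulmxN.
- by rewrite mxconjD mxconjN !mxconjM !mxconjK mulNmx addrC.
Qed.

End OmegaAlgebra.

Section SelfadjointAlgebra.
Variables (C : numClosedFieldType) (n : nat) (H : 'M[C]_n).

Lemma H_selfadjoint0 : H_selfadjoint H 0.
Proof. by rewrite /H_selfadjoint /adjmx mxconj0 trmx0 mulmx0 mul0mx. Qed.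

Lemma H_selfadjointD (X Y : 'M[C]_n) :
  H_selfadjoint H X -> H_selfadjoint H Y -> H_selfadjoint H (X + Y).
Proof.
by rewrite /H_selfadjoint adjmxD mulmxDr mulmxDl => -> ->.
Qed.

Lemma H_selfadjoint_scalar (c : C) : c^* = c -> H_selfadjoint H c%:M.
Proof. by move=> c_real; rewrite /H_selfadjoint adjmx_scalar // scalar_mxC. Qed.

Lemma H_selfadjointM (X Y : 'M[C]_n) : X *m Y = Y *m X ->
  H_selfadjoint H X -> H_selfadjoint H Y -> H_selfadjoint H (X *m Y).
Proof.
move=> XY_comm HX HY; rewrite /H_selfadjoint mulmxA HX -mulmxA HY mulmxA.
by rewrite -adjmxM XY_comm.
Qed.

End SelfadjointAlgebra.

Section RealPolynomialsOfMatrix.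
Variables (R : rcfType) (n : nat).
Local Notation toC := (real_complex R).

Definition real_horner_mx (B : 'M[R[i]]_n.+1) (p : {poly R}) : 'M[R[i]]_n.+1 :=
  horner_mx B (map_poly toC p).

Lemma conj_realC (c : R) : (c%:C%C : R[i])^* = c%:C%C.
Proof. by apply: conj_Creal; apply/complex_realP; exists c. Qed.

Lemma real_horner_mx_ind (B : 'M[R[i]]_n.+1) (P : 'M[R[i]]_n.+1 -> Prop) :
  P 0 ->
  (forall (p : {poly R}) (c : R),
     P (real_horner_mx B p) -> P (real_horner_mx B p *m B + (c%:C%C)%:M)) ->
  forall p : {poly R}, P (real_horner_mx B p).
Proof.
move=> P0 P_step; elim/poly_ind => [|p c IHp]; first by rewrite /real_horner_mx !rmorph0.
have := P_step p c IHp; rewrite /real_horner_mx rmorphD rmorphM /= map_polyX.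
by rewrite map_polyC /= rmorphD rmorphM /= horner_mx_X horner_mx_C -mulmxE.
Qed.

Lemma real_horner_mx_selfadjoint (H B : 'M[R[i]]_n.+1) (p : {poly R}) :
  H_selfadjoint H B -> H_selfadjoint H (real_horner_mx B p).
Proof.
move=> HB; move: p; apply: (real_horner_mx_ind (P := H_selfadjoint H)) => [|p c HX].
  exact: H_selfadjoint0.
apply: H_selfadjointD; last exact/H_selfadjoint_scalar/conj_realC.
by apply: H_selfadjointM HX HB; apply: comm_horner_mx.
Qed.

Lemma char_poly_pos_roots (B : 'M[R[i]]_n.+1) : spec_pos B ->
  exists rs : seq R, all (fun r => 0 < r) rs /\
    char_poly B = map_poly toC (\prod_(r <- rs) ('X - r%:P)).
Proof.
move=> B_pos; have [zs zs_def] := closed_field_poly_normal (char_poly B).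
rewrite (monicP (char_poly_monic B)) scale1r in zs_def.
have zs_pos z : z \in zs -> z \is Num.real /\ 0 < z.
  by move=> z_in; apply: B_pos; rewrite eigenvalue_root_char zs_def root_prod_XsubC.
exists (map (@complex.Re R) zs); split.
  apply/allP => _ /mapP [z /zs_pos [z_real z_gt0] ->].
  by rewrite -(@ltcR R) RRe_real.
rewrite zs_def rmorph_prod big_map; apply: eq_big_seq => z /zs_pos [z_real _].
by rewrite /= map_polyXsubC /= RRe_real.
Qed.

Lemma real_horner_mx_root (m : nat) (B : 'M[R[i]]_n.+1) : (0 < m)%N ->
  spec_pos B -> exists p : {poly R}, real_horner_mx B p ^+ m = B.
Proof.
move=> m_gt0 /char_poly_pos_roots [rs [rs_pos chiB]].
have [p /dvdpP [k pm_def]] := poly_root_mod m_gt0 rs_pos.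
have : horner_mx B (map_poly toC (p ^+ m - 'X)) = 0.
  by rewrite pm_def !rmorphM /= -chiB Cayley_Hamilton mulr0.
rewrite !rmorphB !rmorphXn /= map_polyX horner_mx_X => /eqP.
by rewrite subr_eq0 => /eqP; exists p.
Qed.

End RealPolynomialsOfMatrix.

Lemma real_horner_mx_Omega (R : rcfType) (n : nat) (B : 'M[R[i]]_(n.+1 + n.+1))
  (p : {poly R}) : inOmega B -> @inOmega _ n.+1 (real_horner_mx B p).
Proof.
move=> OB; move: p; apply: (real_horner_mx_ind (P := @inOmega _ n.+1)) => [|p c OX].
  exact: inOmega0.
by apply: inOmegaD; [exact: inOmegaM | exact/inOmega_scalar/conj_realC].
Qed.

Theorem mainTheorem6 (R : realType) (n m : nat) (Hm : (1 <= m)%N)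
  (H B : 'M[R[i]]_(n + n)) :
  inOmega H -> H \in unitmx -> is_hermitian H ->
  inOmega B -> H_selfadjoint H B -> spec_pos B ->
  exists A : 'M[R[i]]_(n + n),
    [/\ inOmega A, H_selfadjoint H A & A ^+ m = B].
Proof.
move=> _ _ _ OB HB B_pos.
case: n H B OB HB B_pos => [|n] H B OB HB B_pos.
  by exists B; split => //; apply/matrixP => -[].
have [p pB] := real_horner_mx_root Hm B_pos.
exists (real_horner_mx B p); split => //.
  exact: real_horner_mx_Omega.
exact: real_horner_mx_selfadjoint.
Qed.
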